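(* Let $\mathbf{X}\subseteq\mathbb{R}_+^n$ be an interval and $\mathrm{IC}(\mathbf{a}_0,\dots,\mathbf{a}_{n-1})$ an interval circulant matrix. Then $\mathrm{IC}(\mathbf{a}_0,\dots,\mathbf{a}_{n-1})$ is universally $\mathbf{X}$-robust, i.e. $x\in\mathrm{Attr}(A)$ for all $A\in\mathrm{IC}(\mathbf{a}_0,\dots,\mathbf{a}_{n-1})$ and all $x\in\mathbf{X}$, if and only if $x^{(j)}\in\mathrm{Attr}(A^{(i)})$ for all $i\in\{0,\dots,n-1\}$ and $j\in\{1,\dots,n\}$.
   Context: Max algebra on $\mathbb{R}_+$: $\oplus=\max$, ordinary product; $\lambda(A)$ greatest max-algebraic eigenvalue (maximum cycle geometric mean); $\mathrm{Attr}(A)=\{x\in\mathbb{R}_+^n: A^{t+1}\otimes x=\lambda(A)A^t\otimes x\text{ for some }t\ge0\}$. An interval $\mathbf{X}=\prod_i\mathbf{X}_i$ has each $\mathbf{X}_i\subseteq\mathbb{R}_+$ nonempty of one of the forms $[\underline{x}_i,\overline{x}_i]$, $(\underline{x}_i,\overline{x}_i)$, $(\underline{x}_i,\overline{x}_i]$, $[\underline{x}_i,\overline{x}_i)$; $x^{(k)}=(\underline{x}_1,\dots,\underline{x}_{k-1},\overline{x}_k,\underline{x}_{k+1},\dots,\underline{x}_n)$. $\mathrm{Circ}(a_0,\dots,a_{n-1})$ has entries $A_{i,j}=a_t$, $t\equiv j-i\pmod n$; $\mathrm{IC}(\mathbf{a}_0,\dots,\mathbf{a}_{n-1})$ is the set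 of all $\mathrm{Circ}(a_0,\dots,a_{n-1})$ with $a_t\in\mathbf{a}_t$, each $\mathbf{a}_t\subseteq\mathbb{R}_+$ a nonempty interval of one of the four forms with endpoints $\underline a_t\le\overline a_t$. $A^{(k)}=\mathrm{Circ}(\underline{a}_0,\dots,\underline{a}_{k-1},\overline{a}_k,\underline{a}_{k+1},\dots,\underline{a}_{n-1})$ for $k\in\{0,\dots,n-1\}$. *)

From Stdlib Require Import Reals List Arith.
Import ListNotations.
Open Scope R_scope.

(* Matrices and vectors of dimension n: only indices < n are meaningful. *)
Definition mat := nat -> nat -> R.
Definition vec := nat -> R.

(* max_{0 <= k < m} f k  (0 is neutral for maxima of nonnegative numbers) *)
Fixpoint maxr (f : nat -> R) (m : nat) : R :=
  match m with
  | O => 0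
  | S m' => Rmax (maxr f m') (f m')
  end.

Definition mmul (n : nat) (A B : mat) : mat :=
  fun i j => maxr (fun k => A i k * B k j) n.
Definition mvec (n : nat) (A : mat) (x : vec) : vec :=
  fun i => maxr (fun j => A i j * x j) n.
Definition mid : mat := fun i j => if Nat.eqb i j then 1 else 0.
Fixpoint mpow (n : nat) (A : mat) (t : nat) : mat :=
  match t with
  | O => mid
  | S t' => mmul n A (mpow n A t')
  end.

Definition nroot (k : nat) (w : R) : R :=
  if Req_EM_T w 0 then 0 else Rpower w (/ INR k).

Fixpoint seqs (n k : nat) : list (list nat) :=
  match k with
  | O => [nil]
  | S k' => flat_map (fun l => map (fun i => i :: l) (seq 0 n)) (seqs n k')
  end.

Fixpoint path_w (A : mat) (h : nat) (l : list nat) (start : nat) : R :=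
  match l with
  | nil => A h start
  | x :: l' => A h x * path_w A x l' start
  end.

Definition cyc_w (A : mat) (l : list nat) : R :=
  match l with
  | nil => 0
  | i :: l' => path_w A i l' i
  end.

Definition max_list (f : list nat -> R) (L : list (list nat)) : R :=
  fold_right (fun l m => Rmax (f l) m) 0 L.

(* lambda(A): maximum cycle geometric mean over cycles of length 1..n *)
Definition lambda (n : nat) (A : mat) : R :=
  maxr (fun k => nroot (S k) (max_list (cyc_w A) (seqs n (S k)))) n.

Definition Attr (n : nat) (A : mat) (x : vec) : Prop :=
  (forall i, (i < n)%nat -> 0 <= x i) /\
  exists t : nat, forall i, (i < n)%nat ->
    mvec n (mpow n A (S t)) x i = lambda n A * mvec n (mpow n A t) x i.

(* a one-dimensional interval in R_+ with endpoints lo <= hi; cl / cr say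
   whether the left / right endpoint is included *)
Definition in_itv (lo hi : R) (cl cr : bool) (x : R) : Prop :=
  (lo < x \/ (cl = true /\ x = lo)) /\ (x < hi \/ (cr = true /\ x = hi)).
Definition itv_ok (lo hi : R) (cl cr : bool) : Prop :=
  0 <= lo /\ (lo < hi \/ (lo = hi /\ cl = true /\ cr = true)).

Definition Circ (n : nat) (a : nat -> R) : mat :=
  fun i j => a ((n + j - i) mod n)%nat.

(* x^(k) (k in 1..n): upper endpoint in coordinate k, lower elsewhere
   (coordinates are 0-based, coordinate k of the paper is index k-1) *)
Definition xk (xlo xhi : vec) (k : nat) : vec :=
  fun i => if Nat.eqb i (k - 1) then xhi i else xlo i.

Definition Ak (n : nat) (alo ahi : nat -> R) (k : nat) : mat :=
  Circ n (fun t => if Nat.eqb t k then ahi t else alo t).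

From Stdlib Require Import Reals Lra Lia List Arith Classical.
Import ListNotations.
Open Scope R_scope.

(* For a circulant [A = Circ(a)] with [a_k = max a], [(A^t y)_i] is the largest
   weight [a_(s_1) ... a_(s_t) y_(i + s_1 + ... + s_t)] of a walk of length [t].
   A walk of length at least [n] contains a block of [d] steps summing to [d k]
   modulo [n] (pigeonhole on prefix sums), and replacing that block by [d] steps
   [k] does not decrease the weight.  Hence from [t = n - 1] on, [A^(t+1) y] is
   [a_k = lambda(A)] times [A^t y] rotated by [k], and [x] is in [Attr(A)] iff
   [a_k^(n-1) x <= A^(n-1) x].  This inequality is preserved when [a] and [x]
   grow and scales with them.  A point [(a, x)] of the box dominates [(c a', d x')]
   for the vertex [(a', x')] raised at the maximal entry [k] of [a] and at the
   coordinate [j] considered, with equality at [k] and [j], so it inherits the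
   inequality at [j] from that vertex.  Conversely, the inequality is closed and
   every vertex is a limit of points of the box, however its ends are open. *)

(** * Max-algebraic powers *)

Lemma maxr_ge0 f m : 0 <= maxr f m.
Proof.
  induction m; simpl; [lra|].
  apply Rle_trans with (maxr f m); [exact IHm | apply Rmax_l].
Qed.

Lemma maxr_ub f m j : (j < m)%nat -> f j <= maxr f m.
Proof.
  induction m; intros Hj; [lia|]; simpl.
  destruct (Nat.eq_dec j m) as [->|Hne]; [apply Rmax_r|].
  apply Rle_trans with (maxr f m); [apply IHm; lia | apply Rmax_l].
Qed.

Lemma maxr_lub f m c :
  0 <= c -> (forall j, (j < m)%nat -> f j <= c) -> maxr f m <= c.
Proof.
  intros Hc; induction m; intros H; simpl; [lra|].
  apply Rmax_lub; [apply IHm; intros; apply H; lia | apply H; lia].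
Qed.

Lemma maxr_attained f m :
  (0 < m)%nat -> (forall j, (j < m)%nat -> 0 <= f j) ->
  exists j, (j < m)%nat /\ maxr f m = f j.
Proof.
  induction m as [|m IH]; intros Hm Hf; [lia|].
  destruct (Nat.eq_dec m 0) as [->|Hm0].
  - exists 0%nat; split; [lia|]. apply Rmax_right, Hf; lia.
  - destruct IH as [j [Hj Ej]]; [lia | intros; apply Hf; lia |].
    simpl; rewrite Ej. destruct (Rle_dec (f j) (f m)).
    + exists m; split; [lia | apply Rmax_right; auto].
    + exists j; split; [lia | apply Rmax_left; lra].
Qed.

Lemma maxr_ext f g m :
  (forall j, (j < m)%nat -> f j = g j) -> maxr f m = maxr g m.
Proof.
  induction m; intros H; simpl; [reflexivity|].
  rewrite IHm, H; auto; intros; apply H; lia.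
Qed.

Lemma maxr_le f g m :
  (forall j, (j < m)%nat -> f j <= g j) -> maxr f m <= maxr g m.
Proof.
  intros H; apply maxr_lub; [apply maxr_ge0|]. intros j Hj.
  apply Rle_trans with (g j); [auto | apply maxr_ub; auto].
Qed.

Lemma maxr_scale f m c : 0 <= c -> maxr (fun j => c * f j) m = c * maxr f m.
Proof.
  intros Hc; induction m; simpl; [ring|]. rewrite IHm. apply RmaxRmult; auto.
Qed.

Lemma mpow_ge0 n A t i j : 0 <= mpow n A t i j.
Proof.
  destruct t; simpl; [unfold mid; destruct (Nat.eqb i j); lra | apply maxr_ge0].
Qed.

Lemma mvec_mmul n A M y i :
  (0 < n)%nat -> (forall k, (k < n)%nat -> 0 <= A i k) -> (forall k j, 0 <= M k j) ->
  (forall j, (j < n)%nat -> 0 <= y j) ->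
  mvec n (mmul n A M) y i = mvec n A (mvec n M y) i.
Proof.
  intros Hn HA HM Hy. unfold mvec, mmul. apply Rle_antisym.
  - apply maxr_lub; [apply maxr_ge0|]. intros j Hj.
    destruct (maxr_attained (fun k => A i k * M k j) n) as [k [Hk ->]]; auto.
    { intros; apply Rmult_le_pos; auto. }
    apply Rle_trans with (A i k * maxr (fun j0 => M k j0 * y j0) n).
    + rewrite Rmult_assoc. apply Rmult_le_compat_l; auto.
      apply (maxr_ub (fun j0 => M k j0 * y j0)); auto.
    + apply (maxr_ub (fun k0 => A i k0 * maxr (fun j0 => M k0 j0 * y j0) n)); auto.
  - apply maxr_lub; [apply maxr_ge0|]. intros k Hk.
    destruct (maxr_attained (fun j => M k j * y j) n) as [j [Hj ->]]; auto.
    { intros; apply Rmult_le_pos; auto. }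
    apply Rle_trans with (maxr (fun k0 => A i k0 * M k0 j) n * y j).
    + rewrite <- Rmult_assoc. apply Rmult_le_compat_r; auto.
      apply (maxr_ub (fun k0 => A i k0 * M k0 j)); auto.
    + apply (maxr_ub (fun j0 => maxr (fun k0 => A i k0 * M k0 j0) n * y j0)); auto.
Qed.

Lemma mvec_ext n M y y' i :
  (forall j, (j < n)%nat -> y j = y' j) -> mvec n M y i = mvec n M y' i.
Proof. intros H; apply maxr_ext; intros j Hj; rewrite H; auto. Qed.

Lemma mvec_scale n M c y i :
  0 <= c -> mvec n M (fun j => c * y j) i = c * mvec n M y i.
Proof.
  intros Hc; unfold mvec. rewrite <- maxr_scale by auto. apply maxr_ext; intros; ring.
Qed.

Lemma mvec_le n M y y' i :
  (forall k j, 0 <= M k j) -> (forall j, (j < n)%nat -> y j <= y' j) ->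
  mvec n M y i <= mvec n M y' i.
Proof.
  intros HM H; apply maxr_le; intros j Hj. apply Rmult_le_compat_l; auto.
Qed.

Definition powv (n : nat) (A : mat) (t : nat) (y : vec) : vec := mvec n (mpow n A t) y.

Section Powers.
Variables (n : nat) (A : mat).
Hypotheses (Hn : (0 < n)%nat) (HA : forall i k, 0 <= A i k).

Lemma powv_ge0 t y i : 0 <= powv n A t y i.
Proof. apply maxr_ge0. Qed.

Lemma powv_0 y i :
  (i < n)%nat -> (forall j, (j < n)%nat -> 0 <= y j) -> powv n A 0 y i = y i.
Proof.
  intros Hi Hy; unfold powv, mvec; simpl. apply Rle_antisym.
  - apply maxr_lub; [auto|]. intros j Hj. unfold mid.
    destruct (Nat.eqb_spec i j); subst; [lra | rewrite Rmult_0_l; auto].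
  - apply Rle_trans with (mid i i * y i).
    + unfold mid; rewrite Nat.eqb_refl; lra.
    + apply (maxr_ub (fun j => mid i j * y j)); auto.
Qed.

Lemma powv_S t y i :
  (forall j, (j < n)%nat -> 0 <= y j) -> powv n A (S t) y i = mvec n A (powv n A t y) i.
Proof. intros Hy; apply mvec_mmul; auto. intros; apply mpow_ge0. Qed.

Lemma powv_scale t c y i :
  0 <= c -> powv n A t (fun j => c * y j) i = c * powv n A t y i.
Proof. apply mvec_scale. Qed.

Lemma powv_le t y y' i :
  (forall j, (j < n)%nat -> y j <= y' j) -> powv n A t y i <= powv n A t y' i.
Proof. intros; apply mvec_le; auto; intros; apply mpow_ge0. Qed.

Lemma powv_add s t x i :
  (i < n)%nat -> (forall j, (j < n)%nat -> 0 <= x j) ->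
  powv n A s (powv n A t x) i = powv n A (s + t) x i.
Proof.
  intros Hi Hx. revert i Hi. induction s; intros i Hi.
  - apply powv_0; auto. intros; apply powv_ge0.
  - rewrite powv_S by (intros; apply powv_ge0). simpl plus. rewrite (powv_S (s + t)) by auto.
    apply mvec_ext. intros j Hj; apply IHs; auto.
Qed.

Lemma powv_eigen_shift t c x :
  0 <= c -> (forall j, (j < n)%nat -> 0 <= x j) ->
  (forall i, (i < n)%nat -> powv n A (S t) x i = c * powv n A t x i) ->
  forall d i, (i < n)%nat -> powv n A (S (t + d)) x i = c * powv n A (t + d) x i.
Proof.
  intros Hc Hx Ht d. induction d; intros i Hi.
  - rewrite Nat.add_0_r; auto.
  - rewrite Nat.add_succ_r, !powv_S by (auto; intros; apply powv_ge0).
    rewrite (mvec_ext n A _ (fun j => c * powv n A (t + d) x j)) by auto.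
    apply mvec_scale; auto.
Qed.

End Powers.

(** * Walks in a circulant *)

Lemma mod_add_mod n i u v : (((i + u) mod n + v) mod n = (i + (u + v)) mod n)%nat.
Proof. rewrite Nat.Div0.add_mod_idemp_l. f_equal; lia. Qed.

Lemma mod_add_mul_n n i w : (i < n)%nat -> ((i + w * n) mod n = i)%nat.
Proof. intros; rewrite Nat.Div0.mod_add; apply Nat.mod_small; auto. Qed.

Lemma circ_step n a i s :
  (i < n)%nat -> (s < n)%nat -> Circ n a i ((i + s) mod n) = a s.
Proof.
  intros Hi Hs; unfold Circ. f_equal.
  destruct (Nat.lt_ge_cases (i + s) n) as [H|H].
  - rewrite (Nat.mod_small (i + s)) by auto.
    replace (n + (i + s) - i)%nat with (s + 1 * n)%nat by lia. apply mod_add_mul_n; auto.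
  - replace (i + s)%nat with ((i + s - n) + 1 * n)%nat by lia.
    rewrite mod_add_mul_n by lia.
    replace (n + (i + s - n) - i)%nat with s by lia. apply Nat.mod_small; auto.
Qed.

Lemma circ_target n i j :
  (i < n)%nat -> (j < n)%nat -> ((i + (n + j - i) mod n) mod n = j)%nat.
Proof.
  intros Hi Hj. rewrite Nat.Div0.add_mod_idemp_r.
  replace (i + (n + j - i))%nat with (j + 1 * n)%nat by lia. apply mod_add_mul_n; auto.
Qed.

Fixpoint walk_weight (a : nat -> R) (l : list nat) : R :=
  match l with
  | nil => 1
  | s :: l' => a s * walk_weight a l'
  end.

Definition endp (n i : nat) (l : list nat) : nat := ((i + list_sum l) mod n)%nat.

Lemma walk_weight_app a l1 l2 :
  walk_weight a (l1 ++ l2) = walk_weight a l1 * walk_weight a l2.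
Proof. induction l1; simpl; [ring | rewrite IHl1; ring]. Qed.

Lemma walk_weight_repeat a s m : walk_weight a (repeat s m) = a s ^ m.
Proof. induction m; simpl; [reflexivity | rewrite IHm; reflexivity]. Qed.

Lemma walk_weight_ge0 a l : (forall s, In s l -> 0 <= a s) -> 0 <= walk_weight a l.
Proof.
  induction l; simpl; intros H; [lra|].
  apply Rmult_le_pos; [apply H | apply IHl]; auto.
Qed.

Lemma walk_weight_le_pow a l c :
  (forall s, In s l -> 0 <= a s <= c) -> walk_weight a l <= c ^ length l.
Proof.
  induction l; simpl; intros H; [lra|].
  destruct (H a0 (or_introl eq_refl)).
  apply Rmult_le_compat; auto.
  apply walk_weight_ge0; intros; apply H; auto.
Qed.

Lemma walk_weight_scale a b c l :
  0 <= c -> (forall s, In s l -> 0 <= b s /\ c * b s <= a s) ->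
  c ^ length l * walk_weight b l <= walk_weight a l.
Proof.
  intros Hc; induction l; simpl; intros H; [lra|].
  destruct (H a0 (or_introl eq_refl)).
  assert (0 <= walk_weight b l) by (apply walk_weight_ge0; intros; apply H; auto).
  replace (c * c ^ length l * (b a0 * walk_weight b l))
    with ((c * b a0) * (c ^ length l * walk_weight b l)) by ring.
  apply Rmult_le_compat; auto.
  - apply Rmult_le_pos; auto.
  - apply Rmult_le_pos; [apply pow_le; auto | auto].
Qed.

(** * Compressing long walks *)

Lemma pigeonhole_nat n (f : nat -> nat) :
  (forall j, (j <= n)%nat -> (f j < n)%nat) -> exists p q, (p < q <= n)%nat /\ f p = f q.
Proof.
  intros Hf. apply NNPP; intros Hno.
  set (L := map f (seq 0 (S n))).
  assert (Hnth : forall i, (i < S n)%nat -> nth i L (f 0%nat) = f i).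
  { intros i Hi. unfold L. rewrite map_nth, seq_nth; auto. }
  assert (HL : NoDup L).
  { apply (NoDup_nth L (f 0%nat)). unfold L at 1 2; rewrite length_map, length_seq.
    intros i j Hi Hj E. rewrite !Hnth in E by auto.
    destruct (Nat.lt_total i j) as [H|[H|H]]; auto; exfalso; apply Hno.
    - exists i, j; split; [lia | auto].
    - exists j, i; split; [lia | auto]. }
  apply NoDup_incl_length with (l' := seq 0 n) in HL.
  - unfold L in HL; rewrite length_map, !length_seq in HL; lia.
  - intros u Hu. unfold L in Hu. apply in_map_iff in Hu as [j [<- Hj]].
    apply in_seq in Hj. apply in_seq. specialize (Hf j ltac:(lia)); lia.
Qed.

Lemma list_sum_repeat k m : list_sum (repeat k m) = (m * k)%nat.
Proof. induction m; simpl; lia. Qed.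

Lemma mod_add_eq_l n x y : (0 < n)%nat -> ((x + y) mod n = x mod n)%nat -> (y mod n = 0)%nat.
Proof.
  intros Hn H. rewrite Nat.Div0.add_mod in H.
  pose proof (Nat.mod_upper_bound x n ltac:(lia)).
  pose proof (Nat.mod_upper_bound y n ltac:(lia)).
  destruct (Nat.lt_ge_cases (x mod n + y mod n) n) as [Hlt|Hge].
  - rewrite Nat.mod_small in H; lia.
  - replace (x mod n + y mod n)%nat with ((x mod n + y mod n - n) + 1 * n)%nat in H by lia.
    rewrite mod_add_mul_n in H; lia.
Qed.

(* Prefix sums of [s_j + c] take only [n] values modulo [n]. *)
Lemma zero_sum_block n c l :
  (0 < n)%nat -> (n <= length l)%nat ->
  exists P B Q, l = P ++ B ++ Q /\ B <> [] /\
    ((list_sum B + length B * c) mod n = 0)%nat.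
Proof.
  intros Hn Hl.
  destruct (pigeonhole_nat n (fun j => ((list_sum (firstn j l) + j * c) mod n)%nat))
    as [p [q [Hpq E]]].
  { intros; apply Nat.mod_upper_bound; lia. }
  set (P := firstn p l); set (B := firstn (q - p) (skipn p l)); set (Q := skipn q l).
  assert (HP : length P = p) by (apply firstn_length_le; lia).
  assert (HB : length B = (q - p)%nat) by (unfold B; rewrite length_firstn, length_skipn; lia).
  assert (El : l = P ++ B ++ Q).
  { rewrite <- (firstn_skipn p l) at 1. f_equal.
    rewrite <- (firstn_skipn (q - p) (skipn p l)) at 1. f_equal.
    unfold Q; rewrite skipn_skipn. f_equal; lia. }
  assert (Eq : firstn q l = P ++ B).
  { rewrite El. replace q with (length P + length B)%nat by lia.
    rewrite firstn_app_2, <- (Nat.add_0_r (length B)), firstn_app_2, app_nil_r.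
    reflexivity. }
  exists P, B, Q; repeat split; auto.
  - intros HB0. rewrite HB0 in HB; simpl in HB; lia.
  - simpl in E. fold P in E. rewrite Eq, list_sum_app in E.
    apply (mod_add_eq_l n (list_sum P + p * c)); auto. rewrite E, HB. f_equal. nia.
Qed.

Lemma block_sum_mod n k sB d z :
  (0 < n)%nat -> ((sB + d * ((n - 1) * k)) mod n = 0)%nat ->
  ((z + sB) mod n = (z + d * k) mod n)%nat.
Proof.
  intros Hn H.
  rewrite <- (Nat.Div0.mod_add (z + sB) (d * k) n).
  replace (z + sB + d * k * n)%nat with ((z + d * k) + (sB + d * ((n - 1) * k)))%nat
    by (destruct n; [lia|]; simpl; rewrite Nat.sub_0_r; nia).
  rewrite Nat.Div0.add_mod, H, Nat.add_0_r. apply Nat.Div0.mod_mod.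
Qed.

(* The block [B] found by [zero_sum_block] (with [c = -k mod n]) is traded for
   [length B - 1] steps [k], one further step [k] being taken off at the start. *)
Lemma walk_compress n a k l :
  (0 < n)%nat -> (k < n)%nat -> (forall s, (s < n)%nat -> 0 <= a s <= a k) ->
  (n <= length l)%nat -> Forall (fun s => s < n)%nat l ->
  exists l', length l' = (length l - 1)%nat /\ Forall (fun s => s < n)%nat l' /\
    walk_weight a l <= a k * walk_weight a l' /\
    forall i, endp n i l = endp n ((i + k) mod n) l'.
Proof.
  intros Hn Hk Ha Hl Hf.
  destruct (zero_sum_block n ((n - 1) * k) l Hn Hl) as [P [B [Q [El [HB Hsum]]]]].
  rewrite El in Hf |- *. apply Forall_app in Hf as [HfP HfBQ].
  apply Forall_app in HfBQ as [HfB HfQ].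
  assert (Hlt : forall s, In s (P ++ B ++ Q) -> (s < n)%nat).
  { apply Forall_forall. rewrite Forall_app, Forall_app; auto. }
  set (d := length B).
  assert (Hd : (1 <= d)%nat) by (unfold d; destruct B; [congruence | simpl; lia]).
  exists (repeat k (d - 1) ++ P ++ Q). repeat split.
  - rewrite !length_app, repeat_length. fold d; lia.
  - rewrite !Forall_app; repeat split; auto. apply Forall_forall.
    intros s Hs; apply repeat_spec in Hs; lia.
  - rewrite !walk_weight_app, walk_weight_repeat.
    assert (Hge : forall l0, incl l0 (P ++ B ++ Q) -> 0 <= walk_weight a l0).
    { intros l0 H0; apply walk_weight_ge0; intros s Hs; apply Ha, Hlt, H0; auto. }
    assert (0 <= walk_weight a P) by (apply Hge; intros s Hs; apply in_or_app; auto).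
    assert (0 <= walk_weight a Q)
      by (apply Hge; intros s Hs; apply in_or_app; right; apply in_or_app; auto).
    assert (HwB : walk_weight a B <= a k * a k ^ (d - 1)).
    { replace (a k * a k ^ (d - 1)) with (a k ^ d)
        by (replace d with (S (d - 1)) at 1 by lia; reflexivity).
      apply walk_weight_le_pow; intros s Hs.
      apply Ha, Hlt, in_or_app; right; apply in_or_app; auto. }
    replace (a k * (a k ^ (d - 1) * (walk_weight a P * walk_weight a Q)))
      with (walk_weight a P * ((a k * a k ^ (d - 1)) * walk_weight a Q)) by ring.
    apply Rmult_le_compat_l; auto. apply Rmult_le_compat_r; auto.
  - intros i. unfold endp. rewrite mod_add_mod, !list_sum_app, list_sum_repeat.
    replace (i + (list_sum P + (list_sum B + list_sum Q)))%nat
      with ((i + list_sum P + list_sum Q) + list_sum B)%nat by lia.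
    rewrite (block_sum_mod n k (list_sum B) d) by auto. f_equal. nia.
Qed.

Section CirculantWalks.
Variables (n : nat) (a : nat -> R).
Hypotheses (Hn : (0 < n)%nat) (Ha : forall s, (s < n)%nat -> 0 <= a s).

Lemma circ_ge0 i j : 0 <= Circ n a i j.
Proof. apply Ha, Nat.mod_upper_bound; lia. Qed.

Lemma endp_cons i s l : endp n i (s :: l) = endp n ((i + s) mod n) l.
Proof. unfold endp; simpl. rewrite mod_add_mod. reflexivity. Qed.

Lemma endp_lt i l : (endp n i l < n)%nat.
Proof. apply Nat.mod_upper_bound; lia. Qed.

Variable y : vec.
Hypothesis Hy : forall j, (j < n)%nat -> 0 <= y j.

Lemma powv_circ_nil i : (i < n)%nat -> powv n (Circ n a) 0 y i = walk_weight a [] * y (endp n i []).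
Proof.
  intros Hi. unfold endp; simpl. rewrite Nat.add_0_r, Nat.mod_small by auto.
  rewrite Rmult_1_l. apply powv_0; auto.
Qed.

Lemma powv_circ_S_ge s t i :
  (s < n)%nat -> (i < n)%nat ->
  a s * powv n (Circ n a) t y ((i + s) mod n) <= powv n (Circ n a) (S t) y i.
Proof.
  intros Hs Hi. rewrite powv_S by (auto; apply circ_ge0; auto).
  rewrite <- (circ_step n a i s) by auto.
  apply (maxr_ub (fun j => Circ n a i j * powv n (Circ n a) t y j)), Nat.mod_upper_bound; lia.
Qed.

Lemma walk_le_powv_circ l i :
  Forall (fun s => s < n)%nat l -> (i < n)%nat ->
  walk_weight a l * y (endp n i l) <= powv n (Circ n a) (length l) y i.
Proof.
  intros Hl; revert i; induction Hl as [|s l Hs Hl IH]; intros i Hi.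
  - rewrite powv_circ_nil; auto; lra.
  - rewrite endp_cons; simpl walk_weight; simpl length. rewrite Rmult_assoc.
    eapply Rle_trans; [|apply (powv_circ_S_ge s); auto].
    apply Rmult_le_compat_l; [apply Ha; auto | apply IH, Nat.mod_upper_bound; lia].
Qed.

Lemma powv_circ_walk t i :
  (i < n)%nat -> exists l, length l = t /\ Forall (fun s => s < n)%nat l /\
    powv n (Circ n a) t y i = walk_weight a l * y (endp n i l).
Proof.
  revert i; induction t; intros i Hi.
  - exists []; repeat split; auto. apply powv_circ_nil; auto.
  - rewrite powv_S; auto; [|apply circ_ge0].
    destruct (maxr_attained (fun j => Circ n a i j * powv n (Circ n a) t y j) n)
      as [j [Hj Ej]]; auto.
    { intros; apply Rmult_le_pos; [apply circ_ge0 | apply powv_ge0]. }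
    destruct (IHt j Hj) as [l [Hl [Hf El]]].
    set (s := ((n + j - i) mod n)%nat).
    exists (s :: l); repeat split; simpl; auto.
    { constructor; auto. apply Nat.mod_upper_bound; lia. }
    unfold mvec at 1; rewrite Ej, endp_cons.
    unfold s; rewrite circ_target, El by auto. unfold Circ; ring.
Qed.

Lemma powv_circ_ge_shift s m i :
  (s < n)%nat -> (i < n)%nat ->
  a s ^ m * y ((i + m * s) mod n) <= powv n (Circ n a) m y i.
Proof.
  intros Hs; revert i; induction m; intros i Hi.
  - rewrite Nat.add_0_r, Nat.mod_small, powv_0 by (auto; apply circ_ge0; auto). lra.
  - eapply Rle_trans; [|apply (powv_circ_S_ge s); auto].
    rewrite <- tech_pow_Rmult, Rmult_assoc. apply Rmult_le_compat_l; [apply Ha; auto|].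
    eapply Rle_trans; [|apply IHm, Nat.mod_upper_bound; lia].
    rewrite mod_add_mod. right; do 3 f_equal; lia.
Qed.

Variable k : nat.
Hypotheses (Hk : (k < n)%nat) (Hmax : forall s, (s < n)%nat -> a s <= a k).

Lemma powv_circ_S_le t i :
  (n <= S t)%nat -> (i < n)%nat ->
  powv n (Circ n a) (S t) y i <= a k * powv n (Circ n a) t y ((i + k) mod n).
Proof.
  intros Ht Hi.
  destruct (powv_circ_walk (S t) i Hi) as [l [Hl [Hf ->]]].
  destruct (walk_compress n a k l Hn Hk (fun s Hs => conj (Ha s Hs) (Hmax s Hs)))
    as [l' [Hl' [Hf' [Hw He]]]]; [lia | auto |].
  rewrite He. replace t with (length l') by lia.
  eapply Rle_trans; [apply Rmult_le_compat_r; [apply Hy, endp_lt; auto | exact Hw]|].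
  rewrite Rmult_assoc. apply Rmult_le_compat_l; [apply Ha; auto|].
  apply walk_le_powv_circ; auto. apply Nat.mod_upper_bound; lia.
Qed.

Lemma powv_circ_stable t i :
  (n - 1 <= t)%nat -> (i < n)%nat ->
  powv n (Circ n a) (S t) y i = a k * powv n (Circ n a) t y ((i + k) mod n).
Proof.
  intros; apply Rle_antisym; [apply powv_circ_S_le; auto; lia | apply powv_circ_S_ge; auto].
Qed.

Lemma powv_circ_stable_iter m i :
  (i < n)%nat ->
  powv n (Circ n a) (n - 1 + m) y i = a k ^ m * powv n (Circ n a) (n - 1) y ((i + m * k) mod n).
Proof.
  revert i; induction m; intros i Hi.
  - rewrite !Nat.add_0_r, Nat.mod_small by auto. ring.
  - rewrite Nat.add_succ_r, powv_circ_stable, IHm by (try apply Nat.mod_upper_bound; lia).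
    rewrite mod_add_mod, <- tech_pow_Rmult, Rmult_assoc. do 3 f_equal.
Qed.

End CirculantWalks.

(** * The eigenvalue of a circulant *)

Lemma nroot_ge0 m w : 0 <= nroot m w.
Proof. unfold nroot; destruct (Req_EM_T w 0); [lra | left; apply exp_pos]. Qed.

Lemma nroot_le_compat m w w' :
  (0 < m)%nat -> 0 <= w <= w' -> nroot m w <= nroot m w'.
Proof.
  intros Hm Hw. unfold nroot at 1. destruct (Req_EM_T w 0); [apply nroot_ge0|].
  unfold nroot; destruct (Req_EM_T w' 0); [lra|].
  apply Rle_Rpower_l; [left; apply Rinv_0_lt_compat, lt_0_INR; lia | lra].
Qed.

Lemma nroot_pow m c : (0 < m)%nat -> 0 <= c -> nroot m (c ^ m) = c.
Proof.
  intros Hm Hc. unfold nroot. destruct (Req_EM_T (c ^ m) 0) as [E|E].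
  - destruct (Req_dec c 0) as [|Hc0]; [auto | exfalso; apply (pow_nonzero c m); auto].
  - assert (0 < c) by (destruct Hc as [|<-]; [auto | rewrite pow_i in E by lia; lra]).
    rewrite <- Rpower_pow, Rpower_mult, Rinv_r, Rpower_1; auto.
    apply not_0_INR; lia.
Qed.

Lemma seqs_length n m l : In l (seqs n m) -> length l = m.
Proof.
  revert l; induction m; simpl; intros l H.
  - destruct H as [<-|[]]; reflexivity.
  - apply in_flat_map in H as [l' [H1 H2]]. apply in_map_iff in H2 as [x [<- _]].
    simpl; f_equal; auto.
Qed.

Lemma in_seqs n m l : length l = m -> Forall (fun s => s < n)%nat l -> In l (seqs n m).
Proof.
  revert l; induction m; intros l Hl Hf; simpl.
  - destruct l; [left; auto | simpl in Hl; lia].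
  - destruct l as [|x l]; [simpl in Hl; lia|]. inversion Hf; subst.
    apply in_flat_map. exists l; split; [apply IHm; auto|].
    apply in_map_iff. exists x; split; [reflexivity | apply in_seq; lia].
Qed.

Lemma max_list_ge0 f L : 0 <= max_list f L.
Proof.
  induction L; simpl; [lra|].
  apply Rle_trans with (max_list f L); [auto | apply Rmax_r].
Qed.

Lemma max_list_ub f L l : In l L -> f l <= max_list f L.
Proof.
  induction L; simpl; [tauto|]. intros [<-|H]; [apply Rmax_l|].
  apply Rle_trans with (max_list f L); [auto | apply Rmax_r].
Qed.

Lemma max_list_lub f L c : 0 <= c -> (forall l, In l L -> f l <= c) -> max_list f L <= c.
Proof. induction L; simpl; intros Hc H; [lra|]. apply Rmax_lub; auto. Qed.

Lemma path_w_le A c h l s :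
  (forall i j, 0 <= A i j <= c) -> 0 <= path_w A h l s <= c ^ S (length l).
Proof.
  intros HA. revert h; induction l as [|x l IH]; intros h; simpl.
  - specialize (HA h s). lra.
  - specialize (IH x). specialize (HA h x). simpl in IH. split.
    + apply Rmult_le_pos; lra.
    + apply Rmult_le_compat; lra.
Qed.

Lemma lambda_le n M c : 0 <= c -> (forall i j, 0 <= M i j <= c) -> lambda n M <= c.
Proof.
  intros Hc HM. apply maxr_lub; auto. intros m Hm.
  rewrite <- (nroot_pow (S m) c) by (auto; lia).
  apply nroot_le_compat; [lia|]. split; [apply max_list_ge0|].
  apply max_list_lub; [apply pow_le; auto|]. intros l Hl.
  apply seqs_length in Hl. destruct l as [|h l]; [discriminate|].
  simpl in Hl; rewrite <- Hl. apply path_w_le; auto.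
Qed.

Lemma lambda_ge_cycle n M c l :
  0 <= c -> (1 <= length l <= n)%nat -> Forall (fun s => s < n)%nat l ->
  c ^ length l <= cyc_w M l -> c <= lambda n M.
Proof.
  intros Hc Hl Hf Hw. set (m := (length l - 1)%nat).
  apply Rle_trans with (nroot (S m) (max_list (cyc_w M) (seqs n (S m)))).
  - rewrite <- (nroot_pow (S m) c) by (auto; lia).
    apply nroot_le_compat; [lia|]. split; [apply pow_le; auto|].
    replace (S m) with (length l) by (unfold m; lia).
    eapply Rle_trans; [exact Hw | apply max_list_ub, in_seqs; auto].
  - apply (maxr_ub (fun k => nroot (S k) (max_list (cyc_w M) (seqs n (S k))))). unfold m; lia.
Qed.

Fixpoint step_path (n k h m : nat) : list nat :=
  match m with
  | O => []
  | S m' => ((h + k) mod n)%nat :: step_path n k ((h + k) mod n) m'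
  end.

Lemma step_path_length n k h m : length (step_path n k h m) = m.
Proof. revert h; induction m; intros h; simpl; auto. Qed.

Lemma step_path_lt n k h m : (0 < n)%nat -> Forall (fun s => s < n)%nat (step_path n k h m).
Proof.
  intros Hn; revert h; induction m; intros h; simpl; constructor; auto.
  apply Nat.mod_upper_bound; lia.
Qed.

Lemma path_w_step_path n a k h m :
  (k < n)%nat -> (h < n)%nat ->
  path_w (Circ n a) h (step_path n k h m) ((h + S m * k) mod n) = a k ^ S m.
Proof.
  intros Hk; revert h; induction m; intros h Hh; cbn [step_path path_w].
  - rewrite Nat.mul_1_l, circ_step by auto. ring.
  - rewrite circ_step by auto. change (a k ^ S (S m)) with (a k * a k ^ S m). f_equal.
    rewrite <- (IHm ((h + k) mod n)) by (apply Nat.mod_upper_bound; lia).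
    f_equal. rewrite mod_add_mod. f_equal; lia.
Qed.

(* The maximum cycle mean is attained on the cycle [0, k, 2k, ...] of length [n]. *)
Lemma lambda_circ n a :
  (0 < n)%nat -> (forall s, (s < n)%nat -> 0 <= a s) -> lambda n (Circ n a) = maxr a n.
Proof.
  intros Hn Ha.
  destruct (maxr_attained a n Hn Ha) as [k [Hk Ek]]. rewrite Ek.
  assert (Hmax : forall s, (s < n)%nat -> a s <= a k) by (intros; rewrite <- Ek; apply maxr_ub; auto).
  apply Rle_antisym.
  - apply lambda_le; [apply Ha; auto|]. intros i j.
    assert (Hs : ((n + j - i) mod n < n)%nat) by (apply Nat.mod_upper_bound; lia).
    unfold Circ; split; [apply Ha | apply Hmax]; auto.
  - apply (lambda_ge_cycle n _ _ (0%nat :: step_path n k 0 (n - 1))); [apply Ha; auto | | |].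
    + simpl; rewrite step_path_length; lia.
    + constructor; [auto | apply step_path_lt; auto].
    + simpl length; rewrite step_path_length. unfold cyc_w.
      rewrite <- (path_w_step_path n a k 0 (n - 1)) by auto.
      replace (S (n - 1)) with n by lia. rewrite Nat.mul_comm, mod_add_mul_n by auto. lra.
Qed.

(** * Attraction *)

Lemma shift_le_invariant n c (z : nat -> R) :
  (0 < n)%nat -> (forall i, (i < n)%nat -> z i <= z ((i + c) mod n)) ->
  forall i, (i < n)%nat -> z ((i + c) mod n) = z i.
Proof.
  intros Hn Hz.
  assert (Hchain : forall m i, (i < n)%nat -> z i <= z ((i + m * c) mod n)).
  { induction m; intros i Hi.
    - rewrite Nat.add_0_r, Nat.mod_small by auto; lra.
    - eapply Rle_trans; [apply IHm; auto|].
      eapply Rle_trans; [apply Hz, Nat.mod_upper_bound; lia|].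
      rewrite mod_add_mod. right; f_equal; f_equal; lia. }
  intros i Hi. apply Rle_antisym; [|apply Hz; auto].
  eapply Rle_trans; [apply (Hchain (n - 1)%nat), Nat.mod_upper_bound; lia|].
  rewrite mod_add_mod. replace (c + (n - 1) * c)%nat with (c * n)%nat by nia.
  rewrite mod_add_mul_n by auto; lra.
Qed.

Definition dominant_at (n : nat) (a : nat -> R) (x : vec) (i : nat) : Prop :=
  maxr a n ^ (n - 1) * x i <= powv n (Circ n a) (n - 1) x i.

Section CirculantAttraction.
Variables (n : nat) (a : nat -> R) (k : nat).
Hypotheses (Hn : (0 < n)%nat) (Ha : forall s, (s < n)%nat -> 0 <= a s)
  (Hk : (k < n)%nat) (Hmax : forall s, (s < n)%nat -> a s <= a k).
Variable x : vec.
Hypothesis Hx : forall j, (j < n)%nat -> 0 <= x j.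

Local Notation A := (Circ n a).
Local Notation z := (powv n (Circ n a) (n - 1) x).

Lemma shift_invariant_of_attr t :
  0 < a k -> (forall i, (i < n)%nat -> powv n A (S t) x i = a k * powv n A t x i) ->
  forall i, (i < n)%nat -> z ((i + k) mod n) = z i.
Proof.
  intros Hak Ht.
  (* At [s = n - 1 + n t] the rotation by [n t k] is trivial, so [A^s x] is a
     multiple of [z]; the eigen-equation at [s] then says that [z] is
     invariant under the rotation by [k]. *)
  set (s := (n - 1 + n * t)%nat).
  assert (Hw : forall j, (j < n)%nat -> powv n A s x j = a k ^ (n * t) * z j).
  { intros j Hj. unfold s; rewrite (powv_circ_stable_iter n a Hn Ha x Hx k Hk Hmax) by auto.
    replace (n * t * k)%nat with (t * k * n)%nat by lia. rewrite mod_add_mul_n; auto. }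
  intros i Hi.
  assert (Hj : ((i + k) mod n < n)%nat) by (apply Nat.mod_upper_bound; lia).
  pose proof (powv_eigen_shift n A Hn (circ_ge0 n a Hn Ha) t (a k) x ltac:(lra) Hx Ht
    (s - t) i Hi) as E.
  replace (t + (s - t))%nat with s in E by (unfold s; nia).
  rewrite (powv_circ_stable n a Hn Ha x Hx k Hk Hmax) in E by (auto; unfold s; lia).
  rewrite !Hw in E by auto.
  apply Rmult_eq_reg_l with (a k * a k ^ (n * t)); [lra|].
  apply Rgt_not_eq, Rmult_lt_0_compat; [lra | apply pow_lt; lra].
Qed.

Lemma dominant_of_null :
  a k = 0 -> forall i, (i < n)%nat -> a k ^ (n - 1) * x i <= z i.
Proof.
  intros E i Hi. destruct (Nat.eq_dec (n - 1) 0) as [E1|E1].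
  - rewrite E1, powv_0 by (auto using circ_ge0). simpl; lra.
  - rewrite E, pow_i by lia. rewrite Rmult_0_l; apply powv_ge0.
Qed.

Lemma dominant_of_shift_invariant :
  0 < a k -> (forall i, (i < n)%nat -> z ((i + k) mod n) = z i) ->
  forall i, (i < n)%nat -> a k ^ (n - 1) * x i <= z i.
Proof.
  intros Hak Hz i Hi. apply Rmult_le_reg_l with (a k); auto.
  pose proof (powv_circ_ge_shift n a Hn Ha x Hx k n i Hk Hi) as G.
  rewrite Nat.mul_comm, mod_add_mul_n in G by auto.
  replace n with (S (n - 1)) in G at 1 by lia.
  rewrite <- Hz, <- (powv_circ_stable n a Hn Ha x Hx k Hk Hmax) by auto.
  replace (S (n - 1)) with n by lia. simpl in G |- *. lra.
Qed.

Lemma shift_invariant_of_dominant :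
  0 < a k -> (forall i, (i < n)%nat -> a k ^ (n - 1) * x i <= z i) ->
  forall i, (i < n)%nat -> z ((i + k) mod n) = z i.
Proof.
  intros Hak Hdom.
  assert (Hpow : 0 < a k ^ (n - 1)) by (apply pow_lt; auto).
  assert (Hle : forall i, (i < n)%nat -> z i <= z ((i + (n - 1) * k) mod n)).
  { intros i Hi. apply Rmult_le_reg_l with (a k ^ (n - 1)); auto.
    rewrite <- (powv_circ_stable_iter n a Hn Ha x Hx k Hk Hmax) by auto.
    rewrite <- (powv_add n A Hn (circ_ge0 n a Hn Ha)) by auto.
    rewrite <- powv_scale by lra. apply powv_le; auto. }
  intros i Hi.
  assert (Hj : ((i + k) mod n < n)%nat) by (apply Nat.mod_upper_bound; lia).
  rewrite <- (shift_le_invariant n _ z Hn Hle _ Hj), mod_add_mod.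
  replace (k + (n - 1) * k)%nat with (k * n)%nat by nia.
  rewrite mod_add_mul_n; auto.
Qed.

End CirculantAttraction.

Lemma attr_circ_iff n a x :
  (0 < n)%nat -> (forall s, (s < n)%nat -> 0 <= a s) ->
  Attr n (Circ n a) x <->
  (forall j, (j < n)%nat -> 0 <= x j) /\ forall i, (i < n)%nat -> dominant_at n a x i.
Proof.
  intros Hn Ha. unfold Attr, dominant_at. rewrite lambda_circ by auto.
  destruct (maxr_attained a n Hn Ha) as [k [Hk Ek]].
  assert (Hmax : forall s, (s < n)%nat -> a s <= a k)
    by (intros; rewrite <- Ek; apply maxr_ub; auto).
  assert (Hak := Ha k Hk).
  rewrite Ek. split.
  - intros [Hx [t Ht]]; split; [exact Hx|].
    destruct (Req_dec (a k) 0) as [E|E]; [apply dominant_of_null; auto|].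
    apply dominant_of_shift_invariant; auto; [lra|].
    apply (shift_invariant_of_attr n a k Hn Ha Hk Hmax x Hx t); [lra | exact Ht].
  - intros [Hx Hdom]; split; [exact Hx|]. exists (n - 1)%nat. intros i Hi.
    change (powv n (Circ n a) (S (n - 1)) x i = a k * powv n (Circ n a) (n - 1) x i).
    rewrite (powv_circ_stable n a Hn Ha x Hx k Hk Hmax) by auto.
    destruct (Req_dec (a k) 0) as [E|E]; [rewrite E; ring|].
    rewrite (shift_invariant_of_dominant n a k Hn Ha Hk Hmax x Hx); auto; lra.
Qed.

(** * Scaling and closedness of the attraction condition *)

Lemma powv_circ_scale n a0 x0 a x c d t i :
  (0 < n)%nat -> (i < n)%nat -> 0 <= c -> 0 <= d ->
  (forall s, (s < n)%nat -> 0 <= a0 s /\ c * a0 s <= a s) ->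
  (forall j, (j < n)%nat -> 0 <= x0 j /\ d * x0 j <= x j) ->
  c ^ t * d * powv n (Circ n a0) t x0 i <= powv n (Circ n a) t x i.
Proof.
  intros Hn Hi Hc Hd Ha Hx.
  assert (Ha0 : forall s, (s < n)%nat -> 0 <= a0 s) by (intros; apply Ha; auto).
  assert (Hx0 : forall j, (j < n)%nat -> 0 <= x0 j) by (intros; apply Hx; auto).
  assert (Ha' : forall s, (s < n)%nat -> 0 <= a s)
    by (intros s Hs; destruct (Ha s Hs); pose proof (Rmult_le_pos c (a0 s)); lra).
  assert (Hx' : forall j, (j < n)%nat -> 0 <= x j)
    by (intros j Hj; destruct (Hx j Hj); pose proof (Rmult_le_pos d (x0 j)); lra).
  destruct (powv_circ_walk n a0 Hn Ha0 x0 Hx0 t i Hi) as [l [Hl [Hf ->]]].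
  assert (Hend := endp_lt n Hn i l).
  eapply Rle_trans; [|rewrite <- Hl; apply walk_le_powv_circ; auto].
  rewrite <- Hl.
  replace (c ^ length l * d * (walk_weight a0 l * x0 (endp n i l)))
    with ((c ^ length l * walk_weight a0 l) * (d * x0 (endp n i l))) by ring.
  apply Rmult_le_compat.
  - apply Rmult_le_pos; [apply pow_le; auto | apply walk_weight_ge0].
    intros s Hs; apply Ha0; rewrite Forall_forall in Hf; auto.
  - apply Rmult_le_pos; auto.
  - apply walk_weight_scale; auto. intros s Hs; apply Ha. rewrite Forall_forall in Hf; auto.
  - apply Hx; auto.
Qed.

Lemma dominant_at_scale n a0 x0 a x c d m :
  (0 < n)%nat -> (m < n)%nat -> 0 <= c -> 0 <= d ->
  (forall s, (s < n)%nat -> 0 <= a0 s /\ c * a0 s <= a s) ->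
  (forall j, (j < n)%nat -> 0 <= x0 j /\ d * x0 j <= x j) ->
  maxr a n = c * maxr a0 n -> x m = d * x0 m ->
  dominant_at n a0 x0 m -> dominant_at n a x m.
Proof.
  intros Hn Hm Hc Hd Ha Hx Ea Ex Hdom. unfold dominant_at in *.
  rewrite Ea, Ex, Rpow_mult_distr.
  eapply Rle_trans; [|apply (powv_circ_scale n a0 x0 a x c d); auto].
  replace (c ^ (n - 1) * maxr a0 n ^ (n - 1) * (d * x0 m))
    with (c ^ (n - 1) * d * (maxr a0 n ^ (n - 1) * x0 m)) by ring.
  apply Rmult_le_compat_l; auto. apply Rmult_le_pos; [apply pow_le|]; auto.
Qed.

Lemma scale_witness u v : 0 <= u <= v -> exists c, 0 <= c <= 1 /\ u = c * v.
Proof.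
  intros Huv. destruct (Req_dec v 0) as [E|E].
  - exists 0; split; [lra | rewrite E in Huv; lra].
  - exists (u / v). split; [split|].
    + unfold Rdiv; apply Rmult_le_pos; [lra | left; apply Rinv_0_lt_compat; lra].
    + apply Rmult_le_reg_r with v; [lra|]. unfold Rdiv. rewrite Rmult_assoc, Rinv_l; lra.
    + field; auto.
Qed.

Lemma le_of_le_plus_small p q C :
  0 <= C -> (forall e, 0 < e <= 1 -> p <= q + e * C) -> p <= q.
Proof.
  intros HC H. apply Rle_plus_epsilon. intros eps Heps.
  set (e := Rmin 1 (eps / (C + 1))).
  assert (He : 0 < e <= 1) by (split; [apply Rmin_pos; [lra | apply Rdiv_lt_0_compat; lra] | apply Rmin_l]).
  assert (Hec : e * (C + 1) <= eps).
  { apply Rle_trans with (eps / (C + 1) * (C + 1)).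
    - apply Rmult_le_compat_r; [lra | apply Rmin_r].
    - right; field; lra. }
  specialize (H e He). nra.
Qed.

Lemma walk_weight_perturb u v l p q e B :
  0 <= e <= 1 -> 0 <= B ->
  (forall s, In s l -> 0 <= u s <= v s + e /\ 0 <= v s <= B) ->
  0 <= p <= q + e -> 0 <= q <= B ->
  walk_weight u l * p <= walk_weight v l * q + e * (INR (S (length l)) * (B + 1) ^ S (length l)).
Proof.
  intros He HB Huv Hp Hq. induction l as [|s l IH]; simpl walk_weight.
  - change (INR 1) with 1. simpl. nra.
  - destruct (Huv s (or_introl eq_refl)) as [Hu Hv].
    specialize (IH (fun s' Hs' => Huv s' (or_intror Hs'))).
    simpl length; rewrite S_INR.
    set (m := length l) in *; set (Q := (B + 1) ^ S m) in *.
    set (U := walk_weight u l * p) in *; set (V := walk_weight v l * q) in *.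
    assert (HU : 0 <= U).
    { apply Rmult_le_pos; [apply walk_weight_ge0; intros; apply Huv|]; simpl; auto; lra. }
    assert (HV : 0 <= V <= Q).
    { assert (Hw : 0 <= walk_weight v l <= B ^ m).
      { split; [apply walk_weight_ge0 | apply walk_weight_le_pow];
          intros s' Hs'; destruct (Huv s' (or_intror Hs')); lra. }
      unfold V, Q. split; [apply Rmult_le_pos; lra|].
      apply Rle_trans with (B ^ S m); [simpl; rewrite Rmult_comm; apply Rmult_le_compat; lra|].
      apply pow_incr; lra. }
    assert (HK : 0 <= INR (S m) * Q) by (apply Rmult_le_pos; [apply pos_INR | unfold Q; apply pow_le; lra]).
    change ((B + 1) ^ S (S m)) with ((B + 1) * Q).
    replace (u s * walk_weight u l * p) with (u s * U) by (unfold U; ring).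
    replace (v s * walk_weight v l * q) with (v s * V) by (unfold V; ring).
    apply Rle_trans with ((v s + e) * (V + e * (INR (S m) * Q))).
    + apply Rmult_le_compat; lra.
    + assert (e * v s * (INR (S m) * Q) <= e * B * (INR (S m) * Q)) by
        (apply Rmult_le_compat_r; [auto | apply Rmult_le_compat_l; lra]).
      assert (e * e * (INR (S m) * Q) <= e * (INR (S m) * Q)) by
        (apply Rmult_le_compat_r; [auto | nra]).
      assert (e * V <= e * ((B + 1) * Q)) by (apply Rmult_le_compat_l; nra).
      nra.
Qed.

Section Perturbation.
Variables (n : nat) (a0 x0 a x : nat -> R) (e B : R).
Hypotheses (Hn : (0 < n)%nat) (He : 0 < e <= 1)
  (Ha0 : forall s, (s < n)%nat -> 0 <= a0 s /\ a0 s + 1 <= B)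
  (Hx0 : forall j, (j < n)%nat -> 0 <= x0 j /\ x0 j + 1 <= B)
  (Ha : forall s, (s < n)%nat -> 0 <= a s /\ a0 s - e <= a s <= a0 s + e)
  (Hx : forall j, (j < n)%nat -> 0 <= x j /\ x0 j - e <= x j <= x0 j + e).

Lemma maxr_pow_perturb m :
  (m < n)%nat ->
  maxr a0 n ^ (n - 1) * x0 m <= maxr a n ^ (n - 1) * x m + e * (INR n * (B + 1) ^ n).
Proof.
  intros Hm.
  destruct (maxr_attained a0 n Hn) as [k [Hk ->]]; [intros; apply Ha0; auto|].
  pose proof (Ha0 k Hk); pose proof (Ha k Hk); pose proof (Hx0 m Hm); pose proof (Hx m Hm).
  rewrite <- (repeat_length k (n - 1)) at 1. rewrite <- walk_weight_repeat.
  eapply Rle_trans.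
  { apply walk_weight_perturb with (v := a) (q := x m) (e := e) (B := B); try lra.
    intros s Hs. apply repeat_spec in Hs; subst s. lra. }
  rewrite walk_weight_repeat, !repeat_length. replace (S (n - 1)) with n by lia.
  apply Rplus_le_compat_r, Rmult_le_compat_r; [lra|].
  apply pow_incr. split; [lra | apply maxr_ub; auto].
Qed.

Lemma walk_perturb_le_powv l m :
  (m < n)%nat -> length l = (n - 1)%nat -> Forall (fun s => s < n)%nat l ->
  walk_weight a l * x (endp n m l) <= powv n (Circ n a0) (n - 1) x0 m + e * (INR n * (B + 1) ^ n).
Proof.
  intros Hm Hl Hf. assert (Hend := endp_lt n Hn m l).
  pose proof (Hx0 _ Hend); pose proof (Hx _ Hend).
  eapply Rle_trans.
  { apply walk_weight_perturb with (v := a0) (q := x0 (endp n m l)) (e := e) (B := B); try lra.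
    intros s Hs. rewrite Forall_forall in Hf. specialize (Hf s Hs).
    pose proof (Ha0 s Hf); pose proof (Ha s Hf); lra. }
  replace (S (length l)) with n by lia. apply Rplus_le_compat_r.
  rewrite <- Hl. apply walk_le_powv_circ; auto; intros; [apply Ha0 | apply Hx0]; auto.
Qed.

End Perturbation.

Lemma dominant_at_closed n a0 x0 m :
  (0 < n)%nat -> (m < n)%nat ->
  (forall s, (s < n)%nat -> 0 <= a0 s) -> (forall j, (j < n)%nat -> 0 <= x0 j) ->
  (forall e, 0 < e <= 1 -> exists a x,
     (forall s, (s < n)%nat -> 0 <= a s /\ a0 s - e <= a s <= a0 s + e) /\
     (forall j, (j < n)%nat -> 0 <= x j /\ x0 j - e <= x j <= x0 j + e) /\
     dominant_at n a x m) ->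
  dominant_at n a0 x0 m.
Proof.
  intros Hn Hm Ha0 Hx0 Happrox.
  pose proof (maxr_ge0 a0 n); pose proof (maxr_ge0 x0 n).
  set (B := maxr a0 n + maxr x0 n + 1).
  assert (HBa : forall s, (s < n)%nat -> 0 <= a0 s /\ a0 s + 1 <= B)
    by (intros s Hs; pose proof (maxr_ub a0 n s Hs); pose proof (Ha0 s Hs); unfold B; lra).
  assert (HBx : forall j, (j < n)%nat -> 0 <= x0 j /\ x0 j + 1 <= B)
    by (intros j Hj; pose proof (maxr_ub x0 n j Hj); pose proof (Hx0 j Hj); unfold B; lra).
  assert (HC : 0 <= INR n * (B + 1) ^ n)
    by (apply Rmult_le_pos; [apply pos_INR | apply pow_le; unfold B; lra]).
  apply (le_of_le_plus_small _ _ (2 * (INR n * (B + 1) ^ n))); [lra|]. intros e He.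
  destruct (Happrox e He) as [a [x [Ha [Hx Hdom]]]]. unfold dominant_at in *.
  destruct (powv_circ_walk n a Hn (fun s Hs => proj1 (Ha s Hs)) x (fun j Hj => proj1 (Hx j Hj))
    (n - 1) m Hm) as [l [Hl [Hf El]]].
  pose proof (maxr_pow_perturb n a0 x0 a x e B Hn He HBa HBx Ha Hx m Hm).
  pose proof (walk_perturb_le_powv n a0 x0 a x e B Hn He HBa HBx Ha Hx l m Hm Hl Hf).
  lra.
Qed.

(** * Vertices of the interval *)

Definition vertex (lo hi : R) (top : bool) : R := if top then hi else lo.

(* A point of the interval within [e] of [vertex lo hi top]: the endpoint itself
   if the interval contains it, otherwise a point at most halfway inside. *)
Definition near_vertex (lo hi : R) (cl cr top : bool) (e : R) : R :=
  if top then (if cr then hi else hi - Rmin e ((hi - lo) / 2))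
  else (if cl then lo else lo + Rmin e ((hi - lo) / 2)).

Lemma itv_ok_bounds lo hi cl cr : itv_ok lo hi cl cr -> 0 <= lo <= hi.
Proof. intros [H0 [H1|[H1 _]]]; lra. Qed.

Lemma in_itv_bounds lo hi cl cr u :
  itv_ok lo hi cl cr -> in_itv lo hi cl cr u -> 0 <= lo <= u /\ u <= hi.
Proof. intros [H0 _] [[H1|[_ H1]] [H2|[_ H2]]]; lra. Qed.

Lemma vertex_ge0 lo hi cl cr top : itv_ok lo hi cl cr -> 0 <= vertex lo hi top.
Proof. intros H; apply itv_ok_bounds in H; destruct top; simpl; lra. Qed.

Lemma near_vertex_spec lo hi cl cr top e :
  itv_ok lo hi cl cr -> 0 < e ->
  in_itv lo hi cl cr (near_vertex lo hi cl cr top e) /\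
  vertex lo hi top - e <= near_vertex lo hi cl cr top e <= vertex lo hi top + e.
Proof.
  intros [H0 H1] He. unfold in_itv, near_vertex, vertex.
  assert (Hd : lo < hi -> 0 < Rmin e ((hi - lo) / 2) <= e /\ Rmin e ((hi - lo) / 2) <= (hi - lo) / 2).
  { intros; repeat split; [apply Rmin_pos; lra | apply Rmin_l | apply Rmin_r]. }
  destruct top, cl, cr; destruct H1 as [H1|[H1 [H2 H3]]];
    try discriminate; try (specialize (Hd H1)); repeat split; lra.
Qed.

Lemma maxr_vertex n lo hi k :
  (k < n)%nat -> 0 <= hi k -> (forall s, (s < n)%nat -> lo s <= hi k) ->
  maxr (fun t => vertex (lo t) (hi t) (Nat.eqb t k)) n = hi k.
Proof.
  intros Hk Hhk Hlo. apply Rle_antisym.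
  - apply maxr_lub; auto. intros s Hs. unfold vertex.
    destruct (Nat.eqb_spec s k) as [->|]; [lra | auto].
  - replace (hi k) with (vertex (lo k) (hi k) (Nat.eqb k k)) at 1
      by (rewrite Nat.eqb_refl; reflexivity).
    apply (maxr_ub (fun t => vertex (lo t) (hi t) (Nat.eqb t k))); auto.
Qed.

Lemma vertex_scaled_le n lo hi u c k :
  0 <= c <= 1 -> u k = c * hi k ->
  (forall s, (s < n)%nat -> 0 <= lo s <= u s /\ u s <= hi s) ->
  forall s, (s < n)%nat ->
  0 <= vertex (lo s) (hi s) (Nat.eqb s k) /\ c * vertex (lo s) (hi s) (Nat.eqb s k) <= u s.
Proof.
  intros Hc Euk Hu s Hs. pose proof (Hu s Hs). unfold vertex.
  destruct (Nat.eqb_spec s k) as [->|]; [lra|].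
  pose proof (Rmult_le_compat_r (lo s) c 1 ltac:(lra) ltac:(lra)); lra.
Qed.

Section IntervalCirculant.
Variables (n : nat) (xlo xhi : nat -> R) (xcl xcr : nat -> bool)
  (alo ahi : nat -> R) (acl acr : nat -> bool).
Hypotheses (hn : (0 < n)%nat)
  (hX : forall i, (i < n)%nat -> itv_ok (xlo i) (xhi i) (xcl i) (xcr i))
  (hA : forall t, (t < n)%nat -> itv_ok (alo t) (ahi t) (acl t) (acr t)).

Lemma vertex_attr_of_robust :
  (forall a, (forall t, (t < n)%nat -> in_itv (alo t) (ahi t) (acl t) (acr t) (a t)) ->
   forall x : vec, (forall i, (i < n)%nat -> in_itv (xlo i) (xhi i) (xcl i) (xcr i) (x i)) ->
   Attr n (Circ n a) x) ->
  forall i j, (i < n)%nat -> (1 <= j <= n)%nat -> Attr n (Ak n alo ahi i) (xk xlo xhi j).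
Proof.
  intros Hrob i j Hi Hj.
  set (a0 := fun t => vertex (alo t) (ahi t) (Nat.eqb t i)).
  set (x0 := fun t => vertex (xlo t) (xhi t) (Nat.eqb t (j - 1))).
  change (Attr n (Circ n a0) x0).
  assert (Ha0 : forall s, (s < n)%nat -> 0 <= a0 s)
    by (intros s Hs; apply (vertex_ge0 _ _ _ _ _ (hA s Hs))).
  assert (Hx0 : forall s, (s < n)%nat -> 0 <= x0 s)
    by (intros s Hs; apply (vertex_ge0 _ _ _ _ _ (hX s Hs))).
  apply attr_circ_iff; auto. split; [exact Hx0|]. intros m Hm.
  apply dominant_at_closed; auto. intros e He.
  set (a := fun t => near_vertex (alo t) (ahi t) (acl t) (acr t) (Nat.eqb t i) e).
  set (x := fun t => near_vertex (xlo t) (xhi t) (xcl t) (xcr t) (Nat.eqb t (j - 1)) e).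
  assert (Ha : forall t, (t < n)%nat -> in_itv (alo t) (ahi t) (acl t) (acr t) (a t) /\
    a0 t - e <= a t <= a0 t + e) by (intros; apply near_vertex_spec; auto; lra).
  assert (Hx : forall t, (t < n)%nat -> in_itv (xlo t) (xhi t) (xcl t) (xcr t) (x t) /\
    x0 t - e <= x t <= x0 t + e) by (intros; apply near_vertex_spec; auto; lra).
  assert (Ha' : forall t, (t < n)%nat -> 0 <= a t).
  { intros t Ht. destruct (Ha t Ht) as [H _].
    apply (in_itv_bounds _ _ _ _ _ (hA t Ht)) in H; lra. }
  assert (Hx' : forall t, (t < n)%nat -> 0 <= x t).
  { intros t Ht. destruct (Hx t Ht) as [H _].
    apply (in_itv_bounds _ _ _ _ _ (hX t Ht)) in H; lra. }
  exists a, x. split; [|split].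
  - intros s Hs; split; [apply Ha' | apply Ha]; auto.
  - intros s Hs; split; [apply Hx' | apply Hx]; auto.
  - assert (Hat : Attr n (Circ n a) x) by (apply Hrob; intros; [apply Ha | apply Hx]; auto).
    apply (attr_circ_iff n a x hn Ha') in Hat as [_ Hd]. apply Hd, Hm.
Qed.

Lemma robust_of_vertex_attr :
  (forall i j, (i < n)%nat -> (1 <= j <= n)%nat -> Attr n (Ak n alo ahi i) (xk xlo xhi j)) ->
  forall a, (forall t, (t < n)%nat -> in_itv (alo t) (ahi t) (acl t) (acr t) (a t)) ->
  forall x : vec, (forall i, (i < n)%nat -> in_itv (xlo i) (xhi i) (xcl i) (xcr i) (x i)) ->
  Attr n (Circ n a) x.
Proof.
  intros Hvert a Ha x Hx.
  assert (ha : forall t, (t < n)%nat -> 0 <= alo t <= a t /\ a t <= ahi t)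
    by (intros t Ht; apply (in_itv_bounds _ _ _ _ _ (hA t Ht)), Ha; auto).
  assert (hx : forall t, (t < n)%nat -> 0 <= xlo t <= x t /\ x t <= xhi t)
    by (intros t Ht; apply (in_itv_bounds _ _ _ _ _ (hX t Ht)), Hx; auto).
  assert (ha0 : forall t, (t < n)%nat -> 0 <= a t) by (intros t Ht; pose proof (ha t Ht); lra).
  apply attr_circ_iff; auto.
  split; [intros t Ht; pose proof (hx t Ht); lra|]. intros m Hm.
  destruct (maxr_attained a n hn ha0) as [k [Hk Ek]].
  pose proof (ha k Hk) as hak; pose proof (hx m Hm) as hxm.
  set (a0 := fun t => vertex (alo t) (ahi t) (Nat.eqb t k)).
  set (x0 := fun t => vertex (xlo t) (xhi t) (Nat.eqb t m)).
  assert (Hdom0 : dominant_at n a0 x0 m).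
  { pose proof (Hvert k (S m) Hk ltac:(lia)) as Hat.
    replace (xk xlo xhi (S m)) with x0 in Hat
      by (unfold xk, x0, vertex; simpl; rewrite Nat.sub_0_r; reflexivity).
    change (Attr n (Circ n a0) x0) in Hat.
    apply attr_circ_iff in Hat as [_ Hd]; [apply Hd, Hm | exact hn |].
    intros s Hs; apply (vertex_ge0 _ _ _ _ _ (hA s Hs)). }
  destruct (scale_witness (a k) (ahi k)) as [c [Hc Ec]]; [lra|].
  destruct (scale_witness (x m) (xhi m)) as [d [Hd Ed]]; [lra|].
  apply (dominant_at_scale n a0 x0 a x c d m); auto; try lra.
  - apply vertex_scaled_le; auto.
  - apply vertex_scaled_le; auto.
  - rewrite Ek, Ec. unfold a0. rewrite maxr_vertex; auto; [lra|]. intros s Hs.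
    pose proof (ha s Hs); pose proof (maxr_ub a n s Hs); lra.
  - unfold x0, vertex; rewrite Nat.eqb_refl; auto.
Qed.

End IntervalCirculant.

Theorem theorem4 (n : nat) (hn : (0 < n)%nat)
  (xlo xhi : nat -> R) (xcl xcr : nat -> bool)
  (hX : forall i, (i < n)%nat -> itv_ok (xlo i) (xhi i) (xcl i) (xcr i))
  (alo ahi : nat -> R) (acl acr : nat -> bool)
  (hA : forall t, (t < n)%nat -> itv_ok (alo t) (ahi t) (acl t) (acr t)) :
  (forall a : nat -> R,
     (forall t, (t < n)%nat -> in_itv (alo t) (ahi t) (acl t) (acr t) (a t)) ->
     forall x : vec,
       (forall i, (i < n)%nat -> in_itv (xlo i) (xhi i) (xcl i) (xcr i) (x i)) ->
       Attr n (Circ n a) x)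
  <->
  (forall i j, (i < n)%nat -> (1 <= j <= n)%nat ->
     Attr n (Ak n alo ahi i) (xk xlo xhi j)).
Proof.
  split.
  - exact (vertex_attr_of_robust n xlo xhi xcl xcr alo ahi acl acr hn hX hA).
  - exact (robust_of_vertex_attr n xlo xhi xcl xcr alo ahi acl acr hn hX hA).
Qed.
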